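(* Let $\mathcal{B}$ be a prime Banach algebra over $\mathbb{R}$ or $\mathbb{C}$ and let $D$ be a dense subset of $\mathcal{B}$. Suppose $\mathcal{B}$ admits a continuous automorphism $f$ and there exist fixed positive integers $p,q$ such that $$f(x^{p}\circ y^{q})+[x^{p},y^{q}]\in Z(\mathcal{B})\quad\text{for all } x,y\in D.$$ Then $\mathcal{B}$ is commutative.
   Context: $Z(\mathcal{B})$ denotes the center of $\mathcal{B}$. For $x,y\in\mathcal{B}$, $x\circ y=xy+yx$ and $[x,y]=xy-yx$. $\mathcal{B}$ is prime if $x\mathcal{B}y=\{0\}$ implies $x=0$ or $y=0$. An automorphism of $\mathcal{B}$ is a bijective map $f:\mathcal{B}\to\mathcal{B}$ with $f(x+y)=f(x)+f(y)$ and $f(xy)=f(x)f(y)$ for all $x,y$. *)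

From HB Require Import structures.
From mathcomp Require Import all_boot all_order all_algebra.
From mathcomp Require Import all_classical all_reals all_analysis.
From mathcomp Require Import complex.
Import Order.TTheory GRing.Theory Num.Theory.
Import numFieldNormedType.Exports.
Local Open Scope ring_scope.
Local Open Scope classical_set_scope.
Set Implicit Arguments. Unset Strict Implicit. Unset Printing Implicit Defensive.

Definition scalars (R : realType) (b : bool) : numFieldType :=
  if b then (complex R : numFieldType) else (R : numFieldType).

Definition banach_algebra_mul (K : numFieldType) (B : completeNormedModType K)
  (mul : B -> B -> B) : Prop :=
  associative mul /\
  (forall x y z, mul (x + y) z = mul x z + mul y z) /\
  (forall x y z, mul x (y + z) = mul x y + mul x z) /\
  (forall (a : K) x y, mul (a *: x) y = a *: mul x y) /\
  (forall (a : K) x y, mul x (a *: y) = a *: mul x y) /\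
  (forall x y, `|mul x y| <= `|x| * `|y|).

(* x^n for n >= 1 (for n = 0 we return x; only n >= 1 is used). *)
Definition alg_pow (T : Type) (mul : T -> T -> T) (x : T) (n : nat) : T :=
  iter n.-1 (mul x) x.

Definition alg_jordan (T : Type) (add : T -> T -> T) (mul : T -> T -> T) x y :=
  add (mul x y) (mul y x).

Definition alg_center (K : numFieldType) (B : completeNormedModType K)
  (mul : B -> B -> B) : set B :=
  [set z | forall x, mul z x = mul x z].

Definition alg_commutator (K : numFieldType) (B : completeNormedModType K)
  (mul : B -> B -> B) (x y : B) : B := mul x y - mul y x.

Definition prime_alg (K : numFieldType) (B : completeNormedModType K)
  (mul : B -> B -> B) : Prop :=
  forall x y : B, (forall b, mul (mul x b) y = 0) -> x = 0 \/ y = 0.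

Definition alg_automorphism (K : numFieldType) (B : completeNormedModType K)
  (mul : B -> B -> B) (f : B -> B) : Prop :=
  [/\ bijective f,
      (forall x y, f (x + y) = f x + f y) &
      (forall x y, f (mul x y) = mul (f x) (f y))].

Definition commutative_alg (K : numFieldType) (B : completeNormedModType K)
  (mul : B -> B -> B) : Prop := forall x y, mul x y = mul y x.

From HB Require Import structures.
From mathcomp Require Import all_boot all_order all_algebra.
From mathcomp Require Import all_classical all_reals all_analysis.
From mathcomp Require Import complex.
From mathcomp Require Import ring.
Import Order.TTheory GRing.Theory Num.Theory.
Import numFieldNormedType.Exports.
Local Open Scope ring_scope.
Local Open Scope classical_set_scope.
Set Implicit Arguments. Unset Strict Implicit. Unset Printing Implicit Defensive.

(* Taking x = y in the hypothesis kills the commutator and leaves f (2 x^n),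
   n = p + q, in the centre; as f is injective and multiplicative and 2 is
   invertible, x^n is central for x in D, hence for every x since
   multiplication is continuous and D is dense.
   In a prime algebra, centrality of all (k+2)-th powers descends to all
   (k+1)-th powers. Every coefficient of (x + t y)^(k+2), as a polynomial in
   the scalar t, is central, in particular the linear one. If the centre
   contains some c <> 0, taking y = c shows that (k+2) c x^(k+1) is central,
   and c is not a zero divisor. If the centre is zero, then x^(k+2) = 0 and
   the linear coefficient x P + y x^(k+1) vanishes; multiplying it on the left
   by x^(k+1) gives x^(k+1) y x^(k+1) = 0 for all y, so x^(k+1) = 0.
   Descending to k = 0 makes every element central. *)

(* Comparing the sums at t and 2 t eliminates v_d. *)
Lemma vanishing_poly_coef_eq0 (K : numFieldType) (V : lmodType K) (d : nat)
    (v : nat -> V) :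
  (forall t : K, \sum_(j < d.+1) t ^+ j *: v j = 0) ->
  forall j, (j <= d)%N -> v j = 0.
Proof.
elim: d v => [|d IH] v Hv j.
  by rewrite leqn0 => /eqP ->; have := Hv 1; rewrite big_ord1 expr1n scale1r.
have scaled_eq0 t : \sum_(i < d.+1) t ^+ i *: ((2 ^+ i - 2 ^+ d.+1) *: v i) = 0.
  have -> : \sum_(i < d.+1) t ^+ i *: ((2 ^+ i - 2 ^+ d.+1) *: v i) =
            \sum_(i < d.+2) t ^+ i *: ((2 ^+ i - 2 ^+ d.+1) *: v i).
    by rewrite [RHS]big_ord_recr /= subrr scale0r scaler0 addr0.
  have -> : \sum_(i < d.+2) t ^+ i *: ((2 ^+ i - 2 ^+ d.+1) *: v i) =
      \sum_(i < d.+2) (2 * t) ^+ i *: v i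
      - (2 ^+ d.+1 : K) *: \sum_(i < d.+2) t ^+ i *: v i.
    rewrite scaler_sumr -sumrB; apply: eq_bigr => i _.
    by rewrite !scalerA -scalerBl exprMn; congr (_ *: _); ring.
  by rewrite !Hv scaler0 subr0.
have v_low i : (i <= d)%N -> v i = 0.
  move=> le_id; apply/eqP.
  have /eqP := IH (fun i => (2 ^+ i - 2 ^+ d.+1) *: v i) scaled_eq0 i le_id.
  rewrite scaler_eq0 subr_eq0 => /orP[/eqP E|//].
  by have := @ltr_eXn2l K 2 (ltr1n K 2) i d.+1; rewrite ltnS le_id E ltxx.
rewrite leq_eqVlt => /orP[/eqP ->|]; last exact: v_low.
have := Hv 1; rewrite big_ord_recr /= big1 ?add0r ?expr1n ?scale1r //.
by move=> i _; rewrite v_low ?scaler0 // -ltnS.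
Qed.

Lemma squeeze_cvg0 (K : numFieldType) (V : normedModType K) (T : Type)
    (F : set_system T) (FF : Filter F) (u : T -> V) (h : T -> K) :
  (forall t, `|u t| <= h t) -> h @ F --> 0 -> u @ F --> 0.
Proof.
move=> uh /cvgr0Pnorm_lt h0; apply/cvgr0Pnorm_lt => e e_gt0.
near=> t; apply: (le_lt_trans (uh t)).
rewrite -(ger0_norm (le_trans (normr_ge0 _) (uh t))); near: t; exact: h0.
Unshelve. all: by end_near.
Qed.

Lemma dense_eq0 (K : numFieldType) (T : topologicalType) (V : normedModType K)
    (g : T -> V) (D : set T) :
  continuous g -> dense D -> (forall x, D x -> g x = 0) -> forall x, g x = 0.
Proof.
move=> gc dD gD x; apply: contrapT => gx_neq0.
have open_g_neq0 : open (g @^-1` (~` [set 0])).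
  apply: open_comp; first by move=> z _; exact: gc.
  by rewrite openC; exact/accessible_closed_set1/hausdorff_accessible/norm_hausdorff.
have [z [/= gz_neq0 Dz]] := dD _ (ex_intro _ x gx_neq0) open_g_neq0.
exact/gz_neq0/gD.
Qed.

Section AlgebraMultiplication.
Variables (K : numFieldType) (B : completeNormedModType K) (mul : B -> B -> B).
Hypothesis Hmul : banach_algebra_mul mul.

Local Notation "x ⋆ y" := (mul x y) (at level 40, left associativity).
Local Notation "x ^^ n" := (alg_pow mul x n) (at level 29, left associativity).
Local Notation central := (alg_center mul).

Let mulA : associative mul. Proof. by case: Hmul. Qed.
Let mulDl x y z : (x + y) ⋆ z = x ⋆ z + y ⋆ z. Proof. by case: Hmul => _ []. Qed.
Let mulDr x y z : x ⋆ (y + z) = x ⋆ y + x ⋆ z. Proof. by case: Hmul => _ [_ []]. Qed.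
Let mulZl (a : K) x y : (a *: x) ⋆ y = a *: (x ⋆ y).
Proof. by case: Hmul => _ [_ [_ []]]. Qed.
Let mulZr (a : K) x y : x ⋆ (a *: y) = a *: (x ⋆ y).
Proof. by case: Hmul => _ [_ [_ [_ []]]]. Qed.

Let normM x y : `|x ⋆ y| <= `|x| * `|y|.
Proof. by case: Hmul => _ [_ [_ [_ []]]]. Qed.

Lemma amul0l y : 0 ⋆ y = 0.
Proof. by apply: (addrI (0 ⋆ y)); rewrite -mulDl !addr0. Qed.

Lemma amul0r y : y ⋆ 0 = 0.
Proof. by apply: (addrI (y ⋆ 0)); rewrite -mulDr !addr0. Qed.

Lemma amulBr x y z : x ⋆ (y - z) = x ⋆ y - x ⋆ z.
Proof. by apply: (addIr (x ⋆ z)); rewrite -mulDr !subrK. Qed.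

Lemma amul_sumr a n (F : 'I_n -> B) : a ⋆ (\sum_(j < n) F j) = \sum_(j < n) a ⋆ F j.
Proof. exact: (big_morph (mul a) (mulDr a) (amul0r a)). Qed.

Lemma amul_suml a n (F : 'I_n -> B) : (\sum_(j < n) F j) ⋆ a = \sum_(j < n) F j ⋆ a.
Proof. exact: (big_morph (mul^~ a) (fun x y => mulDl x y a) (amul0l a)). Qed.

Lemma alg_powS x n : x ^^ n.+2 = x ⋆ x ^^ n.+1.
Proof. by []. Qed.

Lemma alg_powD x m n : x ^^ m.+1 ⋆ x ^^ n.+1 = x ^^ (m + n).+2.
Proof. by elim: m => [//|m IH]; rewrite alg_powS -mulA IH. Qed.

Lemma center_mulrnK v n : central (v *+ n.+1) -> central v.
Proof.
move=> cv w; apply/eqP; have /eqP := cv w.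
rewrite -scaler_nat mulZl mulZr -subr_eq0 -scalerBr scaler_eq0 pnatr_eq0.
by rewrite subr_eq0.
Qed.

Lemma center_poly_coef d (v : nat -> B) :
  (forall t : K, central (\sum_(j < d.+1) t ^+ j *: v j)) ->
  forall j, (j <= d)%N -> central (v j).
Proof.
move=> cv j le_jd w; apply/eqP; rewrite -subr_eq0; apply/eqP.
apply: (@vanishing_poly_coef_eq0 K B d (fun j => v j ⋆ w - w ⋆ v j)) => // t.
have /eqP := cv t w; rewrite amul_suml amul_sumr -subr_eq0 -sumrB => /eqP E.
by apply: etrans E; apply: eq_bigr => i _; rewrite mulZl mulZr scalerBr.
Qed.

(* [pow_coef x y k j] is the coefficient of t^j in (x + t y)^(k+1). *)
Fixpoint pow_coef (x y : B) (k j : nat) : B :=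
  match k, j with
  | 0, 0 => x
  | 0, 1 => y
  | 0, _ => 0
  | k'.+1, 0 => x ⋆ pow_coef x y k' 0
  | k'.+1, j'.+1 => x ⋆ pow_coef x y k' j + y ⋆ pow_coef x y k' j'
  end.

Lemma pow_coefS x y k j :
  pow_coef x y k.+1 j.+1 = x ⋆ pow_coef x y k j.+1 + y ⋆ pow_coef x y k j.
Proof. by []. Qed.

Lemma pow_coef0 x y k : pow_coef x y k 0 = x ^^ k.+1.
Proof. by elim: k => //= k ->. Qed.

Lemma pow_coef_eq0 x y k j : (k.+1 < j)%N -> pow_coef x y k j = 0.
Proof.
elim: k j => [|k IH] [|[|j]] //= lt_kj.
by rewrite !IH ?amul0r ?addr0 // ltnW.
Qed.

Lemma alg_pow_addZ x y k (t : K) :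
  (x + t *: y) ^^ k.+1 = \sum_(j < k.+2) t ^+ j *: pow_coef x y k j.
Proof.
elim: k => [|k IH]; first by rewrite /= big_ord_recr /= big_ord1 scale1r.
rewrite alg_powS IH mulDl mulZl !amul_sumr [RHS]big_ord_recl /=.
under [X in _ = _ + X]eq_bigr do rewrite scalerDr.
rewrite big_split /= addrA; congr (_ + _).
  rewrite (_ : _ + _ = \sum_(j < k.+3) t ^+ j *: (x ⋆ pow_coef x y k j)).
    rewrite [RHS]big_ord_recr /= pow_coef_eq0 // amul0r scaler0 addr0.
    by apply: eq_bigr => i _; rewrite mulZr.
  by rewrite [RHS]big_ord_recl.
by rewrite scaler_sumr; apply: eq_bigr => i _; rewrite mulZr scalerA exprS.
Qed.

Lemma pow_coef1_center x c k :
  central c -> pow_coef x c k.+1 1 = (c ⋆ x ^^ k.+1) *+ k.+2.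
Proof.
move=> cc; elim: k => [|k IH]; first by rewrite /= -(cc x) mulr2n.
rewrite pow_coefS IH pow_coef0 -scaler_nat mulZr scaler_nat mulA -(cc x) -mulA.
by rewrite -alg_powS [RHS]mulrSr.
Qed.

Lemma amul_continuous (a c : B -> B) :
  continuous a -> continuous c -> continuous (fun z => a z ⋆ c z).
Proof.
move=> ac cc z; apply/subr_cvg0.
have expand t : a t ⋆ c t - a z ⋆ c z =
    (a t - a z) ⋆ c z + a z ⋆ (c t - c z) + (a t - a z) ⋆ (c t - c z).
  rewrite -{1}[a t](subrK (a z)) -{1}[c t](subrK (c z)).
  move: (a t - a z) (c t - c z) => da dc.
  by rewrite mulDl !mulDr addrA addrK [RHS]addrC addrA.
have norm_cvg0 (g : B -> B) : continuous g -> `|g t - g z| @[t --> z] --> (0 : K).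
  move=> gc; rewrite -(normr0 B) -(subrr (g z)).
  by apply: cvg_norm; apply: cvgB; [exact: gc | exact: cvg_cst].
apply: (@squeeze_cvg0 _ _ _ _ _ _ (fun t => `|a t - a z| * `|c z|
   + `|a z| * `|c t - c z| + `|a t - a z| * `|c t - c z|)).
  move=> t; rewrite expand; apply: (le_trans (ler_normD _ _)).
  apply: lerD; last exact: normM.
  by apply: (le_trans (ler_normD _ _)); apply: lerD; exact: normM.
have := cvgD (cvgD (cvgMr_tmp (b := `|c z|) (norm_cvg0 _ ac))
  (cvgMl_tmp (a := `|a z|) (norm_cvg0 _ cc))) (cvgM (norm_cvg0 _ ac) (norm_cvg0 _ cc)).
by rewrite mul0r mulr0 mul0r !addr0; apply.
Qed.

Lemma alg_pow_continuous n : continuous (alg_pow mul ^~ n).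
Proof.
rewrite /alg_pow; elim: n.-1 => [|k IH] /=; first by move=> z; exact: cvg_id.
by apply: (amul_continuous (a := id)) => // z; exact: cvg_id.
Qed.

Lemma dense_center_pow (D : set B) n : dense D ->
  (forall x, D x -> central (x ^^ n)) -> forall x, central (x ^^ n).
Proof.
move=> dD cD x w; apply/eqP; rewrite -subr_eq0; apply/eqP; move: x.
have cst : continuous (fun _ : B => w) by move=> y; exact: cvg_cst.
have pc := @alg_pow_continuous n.
have comm_cont : continuous (fun x => x ^^ n ⋆ w - w ⋆ x ^^ n).
  move=> z; apply: cvgB.
    exact: (amul_continuous pc cst).
  exact: (amul_continuous cst pc).
by apply: (dense_eq0 comm_cont dD) => x Dx; rewrite (cD x Dx w) subrr.
Qed.

Section Prime.
Hypothesis Hprime : prime_alg mul.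

Lemma center_lreg c u : central c -> c <> 0 -> c ⋆ u = 0 -> u = 0.
Proof.
move=> cc c_neq0 cu0.
have cBu0 b : c ⋆ b ⋆ u = 0 by rewrite (cc b) -mulA cu0 amul0r.
by case: (Hprime cBu0).
Qed.

Lemma center_pow_pred k :
  (forall x, central (x ^^ k.+2)) -> forall x, central (x ^^ k.+1).
Proof.
move=> cpow.
have coef1_center x y : central (pow_coef x y k.+1 1).
  by apply: (@center_poly_coef k.+2) => // t; rewrite -alg_pow_addZ.
have [[c [c_neq0 cc]]|center0] := pselect (exists c, c <> 0 /\ central c).
  move=> x w; apply/eqP; rewrite -subr_eq0; apply/eqP.
  apply: (center_lreg cc c_neq0).
  have cX : central (c ⋆ x ^^ k.+1).
    by apply: (@center_mulrnK _ k.+1); rewrite -pow_coef1_center.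
  by rewrite amulBr mulA (cX w) [c ⋆ (w ⋆ _)]mulA (cc w) -mulA subrr.
have center_eq0 v : central v -> v = 0.
  by move=> cv; apply: contrapT => v_neq0; apply: center0; exists v.
move=> x; set X := x ^^ k.+1.
suff X0 : X = 0 by move=> w; rewrite X0 amul0l amul0r.
suff XyX0 y : X ⋆ y ⋆ X = 0 by case: (Hprime XyX0).
have coef1_eq0 : x ⋆ pow_coef x y k 1 + y ⋆ X = 0.
  by rewrite /X -(pow_coef0 x y) -pow_coefS; exact/center_eq0/coef1_center.
have Xx : X ⋆ x = x ^^ k.+2 by rewrite /X (alg_powD x k 0) addn0.
have := congr1 (mul X) coef1_eq0.
by rewrite amul0r mulDr !mulA Xx (center_eq0 _ (cpow x)) amul0l add0r.
Qed.

Lemma center_pow_commutative n :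
  (0 < n)%N -> (forall x, central (x ^^ n)) -> commutative_alg mul.
Proof.
case: n => // n _; elim: n => [|n IH] cpow; first exact: cpow.
exact/IH/center_pow_pred.
Qed.

End Prime.
End AlgebraMultiplication.

Local Close Scope classical_set_scope.
Unset Implicit Arguments.

Theorem mainTheorem5 (R : realType) (b : bool)
  (B : completeNormedModType (scalars R b)) (mul : B -> B -> B)
  (D : set B) (f : B -> B) (p q : nat) :
  banach_algebra_mul mul ->
  prime_alg mul ->
  dense D ->
  alg_automorphism mul f ->
  continuous f ->
  (0 < p)%N -> (0 < q)%N ->
  (forall x y, D x -> D y ->
     alg_center mul (f (alg_jordan +%R mul (alg_pow mul x p) (alg_pow mul y q))
                 + alg_commutator mul (alg_pow mul x p) (alg_pow mul y q))) ->
  commutative_alg mul.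
Proof.
move=> Hmul Hprime dD [/bij_inj finj fD fM] _ p_gt0 q_gt0 Hyp.
have f_center u : alg_center mul (f u) -> alg_center mul u.
  by move=> cfu w; apply: finj; rewrite !fM cfu.
have D_center x : D x -> alg_center mul (alg_pow mul x (p + q)).
  move=> Dx; have := Hyp x x Dx Dx.
  rewrite /alg_jordan /alg_commutator -(prednK p_gt0) -(prednK q_gt0).
  rewrite !(alg_powD Hmul) [(q.-1 + _)%N]addnC subrr addr0 fD -mulr2n.
  by move/(center_mulrnK Hmul)/f_center; rewrite addSn addnS.
apply: (center_pow_commutative Hmul Hprime (n := p + q)).
  by rewrite addn_gt0 p_gt0.
exact: (dense_center_pow Hmul dD D_center).
Qed.
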